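(* Let $f:\mathbb{R}^n\to\mathbb{R}\cup\{+\infty\}$ be a closed proper convex function and $x^*\in\arg\min_x f(x)$. Let $(A_k),(a_k),(b_k),(c_k)$, $k\geqslant0$, be real sequences with $a_k>0$, $c_k>0$ for all $k$, $b_k>0$ for $k\geqslant1$, satisfying $$A_k=a_kb_k,\quad A_{k+1}-A_k\leqslant a_k,\quad a_k\leqslant c_k,\quad A_0=b_0=0.$$ Let $x_0\in\mathbb{R}^n$, $z_0=x_0$, and for $k\geqslant0$ $$y_{k+1}=\frac{1}{b_k+1}z_k+\frac{b_k}{b_k+1}x_k,\qquad x_{k+1}=\mathrm{prox}_{\frac{c_k}{b_k+1}f}(y_{k+1}),\qquad z_{k+1}=z_k+\frac{a_k}{c_k}(b_k+1)(x_{k+1}-y_{k+1}).$$ Then for every $k\geqslant1$, $$f(x_k)-f(x^* )\leqslant\frac{\|x_0-x^*\|^2}{2A_k},$$ and for every $k\geqslant0$, $$\min_{0\leqslant j\leqslant k}\Big\|\frac{(b_j+1)x_{j+1}-b_jx_j-z_j}{c_j}\Big\|^2\leqslant\frac{\|x_0-x^*\|^2}{\sum_{j=0}^ka_j^2}.$$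
   Context: For $\gamma>0$, $\mathrm{prox}_{\gamma f}(y)=\arg\min_x\{f(x)+\frac{1}{2\gamma}\|x-y\|^2\}$. $\|\cdot\|$ is the Euclidean norm. *)

From HB Require Import structures.
From mathcomp Require Import all_boot all_order all_algebra.
From mathcomp Require Import all_classical all_reals all_analysis.
Set Implicit Arguments. Unset Strict Implicit. Unset Printing Implicit Defensive.
Import Order.TTheory GRing.Theory Num.Theory.
Import numFieldNormedType.Exports.
Local Open Scope classical_set_scope.
Local Open Scope ring_scope.

Definition enorm (R : realType) (n : nat) (v : 'rV[R]_n) : R :=
  Num.sqrt (\sum_(i < n) (v ord0 i) ^+ 2).

Definition convex_ext (R : realType) (n : nat) (f : 'rV[R]_n -> \bar R) : Prop :=
  forall (x y : 'rV[R]_n) (t : R), 0 < t -> t < 1 ->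
    (f (t *: x + (1 - t) *: y)%R <= t%:E * f x + (1 - t)%:E * f y)%E.

Definition proper_fun (R : realType) (n : nat) (f : 'rV[R]_n -> \bar R) : Prop :=
  (exists x, (f x < +oo)%E) /\ (forall x, f x != -oo%E).

Definition closed_fun (R : realType) (n : nat) (f : 'rV[R]_n -> \bar R) : Prop :=
  forall a : R, closed [set x | (f x <= a%:E)%E].

Definition is_prox (R : realType) (n : nat) (f : 'rV[R]_n -> \bar R) (gamma : R)
  (y p : 'rV[R]_n) : Prop :=
  forall u, (f p + ((2 * gamma)^-1 * enorm (p - y) ^+ 2)%:E
             <= f u + ((2 * gamma)^-1 * enorm (u - y) ^+ 2)%:E)%E.

(** Optimality of the proximal step makes
    [g k = (b k + 1) / c k (y (k+1) - x (k+1))] a subgradient of [f] at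
    [x (k+1)], and the update of [z] reads [z (k+1) = z k - a k g k].
    Applying the subgradient inequality at [xstar] with weight [a k] and at
    [x k] with weight [A k], and using [A (k+1) - A k <= a k] and
    [a k <= c k], the energy [E k = A k (f (x k) - f xstar) + ||z k - xstar||^2 / 2]
    decreases by at least [a k^2 ||g k||^2 / 2] at every step.  Telescoping
    from [E 0 = ||x 0 - xstar||^2 / 2] bounds both the objective gap (weighted
    by [A k]) and the sum of the [a j^2 ||g j||^2]; the residual in the
    statement is exactly [- g j]. *)
From mathcomp Require Import all_boot all_order all_algebra.
From mathcomp Require Import all_classical all_reals all_analysis.
From mathcomp Require Import ring lra.
Import Order.TTheory GRing.Theory Num.Theory.
Local Open Scope ring_scope.
Set Implicit Arguments. Unset Strict Implicit.

Section Dot.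
Variables (R : realType) (n : nat).

Definition dot (u v : 'rV[R]_n) : R := \sum_(i < n) u ord0 i * v ord0 i.

Lemma dotC u v : dot u v = dot v u.
Proof. by apply: eq_bigr => i _; rewrite mulrC. Qed.

Lemma dotDl u v w : dot (u + v) w = dot u w + dot v w.
Proof. by rewrite /dot -big_split; apply: eq_bigr => i _; rewrite !mxE mulrDl. Qed.

Lemma dotZl (t : R) u w : dot (t *: u) w = t * dot u w.
Proof. by rewrite /dot mulr_sumr; apply: eq_bigr => i _; rewrite !mxE mulrA. Qed.

Lemma dotNl u w : dot (- u) w = - dot u w.
Proof. by rewrite -scaleN1r dotZl mulN1r. Qed.

Lemma dotBl u v w : dot (u - v) w = dot u w - dot v w.
Proof. by rewrite dotDl dotNl. Qed.

Lemma dotDr u v w : dot w (u + v) = dot w u + dot w v.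
Proof. by rewrite !(dotC w) dotDl. Qed.

Lemma dotZr (t : R) u w : dot w (t *: u) = t * dot w u.
Proof. by rewrite !(dotC w) dotZl. Qed.

Lemma dotNr u w : dot w (- u) = - dot w u.
Proof. by rewrite !(dotC w) dotNl. Qed.

Lemma dotBr u v w : dot w (u - v) = dot w u - dot w v.
Proof. by rewrite !(dotC w) dotBl. Qed.

Lemma dot_ge0 u : 0 <= dot u u.
Proof. by apply: sumr_ge0 => i _; rewrite -expr2 sqr_ge0. Qed.

Lemma enorm_sqr u : enorm u ^+ 2 = dot u u.
Proof.
rewrite /enorm sqr_sqrtr; last exact: dot_ge0.
by apply: eq_bigr => i _; rewrite expr2.
Qed.

Lemma dot_scaleDD (t : R) d e :
  dot (t *: d + e) (t *: d + e) = t * (t * dot d d) + 2 * t * dot d e + dot e e.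
Proof. by rewrite !dotDl !dotDr !dotZl !dotZr (dotC e d); ring. Qed.

End Dot.
Arguments dot {R n}.

Lemma le0_of_le_vanishing_mul (R : realFieldType) (X K : R) :
  (forall t, 0 < t -> t < 1 -> X <= t * K) -> X <= 0.
Proof.
move=> hX; rewrite leNgt; apply/negP => X_gt0.
have d_gt0 : 0 < X + `|K| + 1 by have := normr_ge0 K; lra.
set t := X / (X + `|K| + 1).
have t_gt0 : 0 < t by exact: divr_gt0.
have t_lt1 : t < 1 by rewrite /t ltr_pdivrMr // mul1r; have := normr_ge0 K; lra.
have : t * `|K| < X by rewrite /t mulrAC ltr_pdivrMr //; have := normr_ge0 K; nra.
have : t * K <= t * `|K| by rewrite ler_pM2l // ler_norm.
have := hX t t_gt0 t_lt1; lra.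
Qed.

Section ProperFunctions.
Variables (R : realType) (n : nat) (f : 'rV[R]_n -> \bar R).
Hypothesis f_proper : proper_fun f.

Lemma fin_num_proper_min m : (forall u, (f m <= f u)%E) -> f m \is a fin_num.
Proof.
move=> m_min; have [[w fw_lt] f_neq_Noo] := f_proper.
by rewrite fin_numE f_neq_Noo lt_eqF //=; exact: le_lt_trans (m_min w) fw_lt.
Qed.

Lemma fin_num_prox gam y p : is_prox f gam y p -> f p \is a fin_num.
Proof.
move=> p_prox; have [[w fw_lt] f_neq_Noo] := f_proper.
rewrite fin_numE f_neq_Noo /=; apply/negP => /eqP fp_oo.
have := p_prox w; rewrite fp_oo addye // leye_eq.
by case: (f w) fw_lt (f_neq_Noo w).
Qed.

End ProperFunctions.

(* Comparing the prox objective at [p] and at the convex combination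
   [t u + (1 - t) p] leaves an excess of order [t^2] as [t -> 0]. *)
Lemma prox_subgradient (R : realType) (n : nat) (f : 'rV[R]_n -> \bar R)
    (gam : R) y p u (fp fu : R) :
  convex_ext f -> 0 < gam -> is_prox f gam y p -> f p = fp%:E -> f u = fu%:E ->
  fp + gam^-1 * dot (y - p) (u - p) <= fu.
Proof.
move=> f_convex gam_gt0 p_prox fpE fuE.
have half_inv : (2 * gam)^-1 = gam^-1 / 2 by rewrite invfM mulrC.
rewrite -subr_ge0 -oppr_le0 opprB.
apply: (le0_of_le_vanishing_mul (K := gam^-1 / 2 * dot (u - p) (u - p))) => t t_gt0 t_lt1.
have := le_trans (p_prox (t *: u + (1 - t) *: p)) (leeD2r _ (f_convex u p t t_gt0 t_lt1)).
rewrite fuE fpE -!EFinM -!EFinD lee_fin !enorm_sqr half_inv.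
have -> : t *: u + (1 - t) *: p - y = t *: (u - p) + (p - y).
  by apply/rowP => i; rewrite !mxE; ring.
rewrite dot_scaleDD.
have -> : dot (u - p) (p - y) = - dot (y - p) (u - p) by rewrite dotC -dotNl opprB.
by move=> h; rewrite -(ler_pM2l t_gt0); lra.
Qed.

Lemma bigmin_mul_sum_le (R : realDomainType) k (G w : nat -> R) (idx : R) :
  (forall j, 0 <= w j) ->
  \big[Num.min/idx]_(j < k.+1) G j * \sum_(j < k.+1) w j <= \sum_(j < k.+1) w j * G j.
Proof.
move=> w_ge0; rewrite mulr_sumr; apply: ler_sum => j _.
by rewrite mulrC ler_wpM2l //; exact: bigmin_le.
Qed.

Section AcceleratedProximalPoint.
Variables (R : realType) (n : nat) (f : 'rV[R]_n -> \bar R) (xstar : 'rV[R]_n).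
Variables (A a b c : nat -> R) (x y z : nat -> 'rV[R]_n).
Hypotheses (f_proper : proper_fun f) (f_convex : convex_ext f)
  (xstar_min : forall u, (f xstar <= f u)%E).
Hypotheses (a_gt0 : forall k, 0 < a k) (c_gt0 : forall k, 0 < c k)
  (b_gt0 : forall k, (1 <= k)%N -> 0 < b k) (A_def : forall k, A k = a k * b k)
  (A_incr : forall k, A k.+1 - A k <= a k) (a_le_c : forall k, a k <= c k)
  (b0 : b 0%N = 0) (z0 : z 0%N = x 0%N).
Hypotheses
  (y_def : forall k, y k.+1 = (b k + 1)^-1 *: z k + (b k / (b k + 1)) *: x k)
  (x_prox : forall k, is_prox f (c k / (b k + 1)) (y k.+1) (x k.+1))
  (z_def : forall k, z k.+1 = z k + (a k / c k * (b k + 1)) *: (x k.+1 - y k.+1)).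

Let fstar := fine (f xstar).
Let F k := fine (f (x k)).
Let g k := ((b k + 1) / c k) *: (y k.+1 - x k.+1).
Let E k := A k * (F k - fstar) + dot (z k - xstar) (z k - xstar) / 2.

Lemma b_ge0 k : 0 <= b k.
Proof. by case: k => [|k]; [rewrite b0 | exact/ltW/b_gt0]. Qed.

Lemma A_ge0 k : 0 <= A k.
Proof. by rewrite A_def mulr_ge0 ?b_ge0 // ltW. Qed.

Lemma A0 : A 0%N = 0.
Proof. by rewrite A_def b0 mulr0. Qed.

Lemma f_xstarE : f xstar = fstar%:E.
Proof. by rewrite /fstar fineK //; apply: (fin_num_proper_min f_proper). Qed.

Lemma f_xE k : f (x k.+1) = (F k.+1)%:E.
Proof. by rewrite /F fineK //; apply: (fin_num_prox f_proper (x_prox k)). Qed.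

Lemma fstar_le_F k : fstar <= F k.+1.
Proof. by rewrite -lee_fin -f_xstarE -f_xE. Qed.

Lemma gap_ge0 k : 0 <= A k * (F k - fstar).
Proof.
case: k => [|k]; first by rewrite A0 mul0r.
by rewrite mulr_ge0 ?A_ge0 // subr_ge0 fstar_le_F.
Qed.

Lemma subgradient_ineq k u fu : f u = fu%:E -> F k.+1 + dot (g k) (u - x k.+1) <= fu.
Proof.
move=> fuE; have b1_gt0 : 0 < b k + 1 by have := b_ge0 k; lra.
have gam_gt0 : 0 < c k / (b k + 1) by rewrite divr_gt0.
have := prox_subgradient f_convex gam_gt0 (x_prox k) (f_xE k) fuE.
by rewrite invf_div /g dotZl.
Qed.

Lemma subgradient_at_iterate k :
  A k * (F k.+1 + dot (g k) (x k - x k.+1)) <= A k * F k.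
Proof.
case: k => [|k]; first by rewrite A0 !mul0r.
by rewrite ler_wpM2l ?A_ge0 // subgradient_ineq // f_xE.
Qed.

Lemma z_step k : z k.+1 = z k - a k *: g k.
Proof. by rewrite z_def /g; apply/rowP => i; rewrite !mxE; ring. Qed.

Lemma residual_eq k : (b k + 1) *: x k.+1 - b k *: x k - z k = - c k *: g k.
Proof.
have b1_gt0 : 0 < b k + 1 by have := b_ge0 k; lra.
rewrite /g y_def; apply/rowP => i; rewrite !mxE.
by field; rewrite !gt_eqF ?c_gt0.
Qed.

Lemma residual_sqr k :
  enorm ((c k)^-1 *: ((b k + 1) *: x k.+1 - b k *: x k - z k)) ^+ 2 = dot (g k) (g k).
Proof.
rewrite residual_eq enorm_sqr scalerA mulrN mulVf ?gt_eqF // scaleN1r.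
by rewrite dotNl dotNr opprK.
Qed.

Lemma lyapunov_decrease k : E k.+1 + a k ^+ 2 * dot (g k) (g k) / 2 <= E k.
Proof.
have := fstar_le_F k; have := subgradient_ineq k f_xstarE; have := subgradient_at_iterate k.
have := residual_eq k; have := z_step k.
rewrite /E; move: (g k) (F k.+1) => G F1 zE res at_xk at_xstar F1_ge.
have gap_incr : (A k.+1 - A k - a k) * (F1 - fstar) <= 0.
  by apply: mulr_le0_ge0; have := A_incr k; lra.
have a_step : a k * (a k - c k) * dot G G <= 0.
  by apply: mulr_le0_ge0; [have := a_le_c k; have := a_gt0 k; nra | exact: dot_ge0].
have a_res := congr1 (fun v => a k * dot G v) res.
have a_at_xstar : a k * (F1 - fstar) <= a k * dot G (x k.+1 - xstar).
  by rewrite ler_pM2l // dotBr; move: at_xstar; rewrite dotBr; lra.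
have -> : z k.+1 - xstar = (- a k) *: G + (z k - xstar).
  by rewrite zE; apply/rowP => i; rewrite !mxE; ring.
rewrite dot_scaleDD; rewrite !dotBr !dotZr (A_def k) in at_xk gap_incr a_res a_at_xstar *.
lra.
Qed.

Lemma lyapunov_telescope k :
  E k + \sum_(j < k) a j ^+ 2 * dot (g j) (g j) / 2 <= dot (x 0%N - xstar) (x 0%N - xstar) / 2.
Proof.
elim: k => [|k IH]; first by rewrite big_ord0 addr0 /E A0 mul0r add0r z0.
by rewrite big_ord_recr /=; have := lyapunov_decrease k; lra.
Qed.

Lemma weighted_residuals_ge0 k : 0 <= \sum_(j < k) a j ^+ 2 * dot (g j) (g j) / 2.
Proof. by apply: sumr_ge0 => j _; rewrite divr_ge0 // mulr_ge0 ?sqr_ge0 ?dot_ge0. Qed.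

Lemma objective_rate k : (1 <= k)%N ->
  (f (x k) - f xstar <= (enorm (x 0%N - xstar) ^+ 2 / (2 * A k))%:E)%E.
Proof.
case: k => [//|k] _.
have A_gt0 : 0 < A k.+1 by rewrite A_def mulr_gt0 ?a_gt0 ?b_gt0.
have := lyapunov_telescope k.+1; have := weighted_residuals_ge0 k.+1.
have := dot_ge0 (z k.+1 - xstar); rewrite /E => z_ge0 sum_ge0 energy_le.
rewrite f_xE f_xstarE -EFinB lee_fin enorm_sqr ler_pdivlMr ?mulr_gt0 //; lra.
Qed.

Lemma residual_rate k :
  \big[Num.min/enorm ((c 0%N)^-1 *: ((b 0%N + 1) *: x 1%N - b 0%N *: x 0%N - z 0%N)) ^+ 2]_(j < k.+1)
     enorm ((c j)^-1 *: ((b j + 1) *: x j.+1 - b j *: x j - z j)) ^+ 2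
  <= enorm (x 0%N - xstar) ^+ 2 / \sum_(j < k.+1) a j ^+ 2.
Proof.
have sum_gt0 : 0 < \sum_(j < k.+1) a j ^+ 2.
  by rewrite big_ord_recl ltr_wpDr ?exprn_gt0 ?sumr_ge0 // => j _; exact: sqr_ge0.
rewrite ler_pdivlMr //; under eq_bigr => j _ do rewrite residual_sqr.
apply: le_trans (bigmin_mul_sum_le _ (fun j => dot (g j) (g j)) _ (fun j => sqr_ge0 (a j))) _.
have := lyapunov_telescope k.+1; have := dot_ge0 (z k.+1 - xstar); have := gap_ge0 k.+1.
rewrite enorm_sqr -mulr_suml /E; lra.
Qed.

End AcceleratedProximalPoint.

Theorem theorem6 (R : realType) (n : nat) (f : 'rV[R]_n -> \bar R)
  (xstar : 'rV[R]_n) (A a b c : nat -> R) (x y z : nat -> 'rV[R]_n) :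
  closed_fun f -> proper_fun f -> convex_ext f ->
  (forall u, (f xstar <= f u)%E) ->
  (forall k, 0 < a k) -> (forall k, 0 < c k) -> (forall k, (1 <= k)%N -> 0 < b k) ->
  (forall k, A k = a k * b k) ->
  (forall k, A k.+1 - A k <= a k) ->
  (forall k, a k <= c k) ->
  A 0%N = 0 -> b 0%N = 0 ->
  z 0%N = x 0%N ->
  (forall k, y k.+1 = (b k + 1)^-1 *: z k + (b k / (b k + 1)) *: x k) ->
  (forall k, is_prox f (c k / (b k + 1)) (y k.+1) (x k.+1)) ->
  (forall k, z k.+1 = z k + (a k / c k * (b k + 1)) *: (x k.+1 - y k.+1)) ->
  (forall k, (1 <= k)%N ->
     (f (x k) - f xstar <= (enorm (x 0%N - xstar) ^+ 2 / (2 * A k))%:E)%E) /\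
  (forall k,
     \big[Num.min/enorm ((c 0%N)^-1 *: ((b 0%N + 1) *: x 1%N - b 0%N *: x 0%N - z 0%N)) ^+ 2]_(j < k.+1)
        enorm ((c j)^-1 *: ((b j + 1) *: x j.+1 - b j *: x j - z j)) ^+ 2
     <= enorm (x 0%N - xstar) ^+ 2 / \sum_(j < k.+1) a j ^+ 2).
Proof.
(* Closedness of [f] only serves the existence of the proximal points, which are given. *)
move=> _ f_proper f_convex xstar_min a_gt0 c_gt0 b_gt0 A_def A_incr a_le_c _ b0 z0
  y_def x_prox z_def.
split.
- exact: (objective_rate f_proper f_convex xstar_min a_gt0 c_gt0 b_gt0 A_def A_incr
    a_le_c b0 z0 y_def x_prox z_def).
- exact: (residual_rate f_proper f_convex xstar_min a_gt0 c_gt0 b_gt0 A_def A_incr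
    a_le_c b0 z0 y_def x_prox z_def).
Qed.
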